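(* Let $X,Y$ be Banach spaces, let $S$ be a subset of $X$ (with the metric induced by the norm), let $K\ge0$, and let $f:S\to Y$ be a coarse quotient map with constant $K$ that is coarse Lipschitz. Then for all $0<t\le1$, $$\bar{\beta}_X\left(\frac{t}{48\,{\rm Lip}_\infty(f)\,c_\infty(f)}\right)\le\frac{3}{2}\bar{\rho}_Y(t).$$
   Context: All Banach spaces are real and infinite-dimensional; $B_X$, $S_X$ are the closed unit ball and unit sphere; $B_Z(z,r)$ is the closed ball of radius $r$ about $z$ in a metric space $Z$; for $A\subseteq Y$, $A^K:=\{y: \|y-a\|\le K\text{ for some }a\in A\}$. $\bar{\rho}_Y(t):=\sup_{y\in S_Y}\inf_{\dim(Y/Z)<\infty}\sup_{z\in S_Z}\|y+tz\|-1$ (infimum over finite-codimensional subspaces). The $(\beta)$-modulus is $\bar{\beta}_X(t)=1-\sup\{\inf_{n\ge1}\|x-x_n\|/2 : x,x_n\in B_X,\ {\rm sep}(\{x_n\})\ge t\}$, where ${\rm sep}(\{x_n\}_{n\ge1}):=\inf_{i\ne j}\|x_i-x_j\|$. For $f:S\to Y$: $\omega_f(t):=\sup\{\|f(x)-f(y)\|: x,y\in S,\ \|x-y\|\le t\}$; $f$ is coarsely continuous if $\omega_f(t)<\infty$ for all $t>0$; $f$ is co-coarsely continuous with constant $K$ if for every $d>K$ there is $\delta(d)>0$ with $f(B_S(x,\delta))^K\supseteq B_Y(f(x),d)$ for all $x\in S$; $f$ is a coarse quotient map with constant $K$ if both hold. ${\rm Lip}_s(f):=\sup\{\|f(x)-f(y)\|/\|x-y\|: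 \|x-y\|\ge s\}$, ${\rm Lip}_\infty(f):=\inf_{s>0}{\rm Lip}_s(f)$, and $f$ is coarse Lipschitz if ${\rm Lip}_s(f)<\infty$ for some $s>0$. For $d>K$, $c_d$ is the infimum of all $c>0$ such that $f(B_S(x,cr))^K\supseteq B_Y(f(x),r)$ for all $x\in S$ and all $r\ge d$; $c_\infty(f):=\inf_{d>K}c_d=\lim_{d\to\infty}c_d$. *)

From mathcomp Require Import all_boot all_order all_algebra.
From mathcomp Require Import all_classical all_reals all_analysis.
Set Implicit Arguments. Unset Strict Implicit. Unset Printing Implicit Defensive.
Import Order.TTheory GRing.Theory Num.Theory.
Import numFieldNormedType.Exports.
Local Open Scope classical_set_scope.
Local Open Scope ring_scope.

Section Defs.
Variable R : realType.

Definition lin_subspace (Y : normedModType R) (Z : set Y) : Prop :=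
  Z 0 /\ forall (a : R) (x y : Y), Z x -> Z y -> Z (a *: x + y).

Definition fin_codim (Y : normedModType R) (Z : set Y) : Prop :=
  lin_subspace Z /\
  exists (n : nat) (e : 'I_n -> Y), forall y : Y,
    exists (z : Y) (c : 'I_n -> R), Z z /\ y = z + \sum_(i < n) c i *: e i.

Definition infinite_dim (X : normedModType R) : Prop :=
  forall (n : nat) (e : 'I_n -> X), exists x : X,
    forall c : 'I_n -> R, x <> \sum_(i < n) c i *: e i.

Definition unit_sphere (X : normedModType R) (Z : set X) : set X :=
  [set z | Z z /\ `|z| = 1].
Definition unit_ball (X : normedModType R) : set X := [set x | `|x| <= 1].

Definition cball_in (X : normedModType R) (Z : set X) (z : X) (r : R) : set X :=
  [set x | Z x /\ `|x - z| <= r].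

Definition fatten (Y : normedModType R) (A : set Y) (K : R) : set Y :=
  [set y | exists2 a, A a & `|y - a| <= K].

Definition rho_bar (Y : normedModType R) (t : R) : \bar R :=
  ereal_sup [set ereal_inf [set ereal_sup
      [set ((`|y + t *: z| - 1)%:E) | z in unit_sphere Z]
    | Z in [set Z : set Y | fin_codim Z]]
  | y in unit_sphere setT].

Definition sep (X : normedModType R) (u : nat -> X) : \bar R :=
  ereal_inf [set (`|u ij.1 - u ij.2|)%:E | ij in [set ij : nat * nat | ij.1 <> ij.2]].

Definition beta_bar (X : normedModType R) (t : R) : \bar R :=
  (1 - ereal_sup [set ereal_inf [set (`|xu.1 - xu.2 n| / 2)%:E | n in [set: nat]]
     | xu in [set xu : X * (nat -> X) |
         @unit_ball X xu.1 /\ (forall n, @unit_ball X (xu.2 n)) /\ (t%:E <= sep xu.2)%E]])%E.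

Section Maps.
Variables (X Y : normedModType R) (S : set X) (f : X -> Y).
(* f is only considered on S *)

Definition modulus_cont (t : R) : \bar R :=
  ereal_sup [set (`|f xy.1 - f xy.2|)%:E
    | xy in [set xy : X * X | S xy.1 /\ S xy.2 /\ `|xy.1 - xy.2| <= t]].

Definition coarsely_continuous : Prop :=
  forall t : R, 0 < t -> (modulus_cont t < +oo)%E.

Definition co_coarsely_continuous (K : R) : Prop :=
  forall d : R, K < d -> exists2 delta : R, 0 < delta &
    forall x, S x -> cball_in setT (f x) d `<=` fatten (f @` cball_in S x delta) K.

Definition coarse_quotient (K : R) : Prop :=
  coarsely_continuous /\ co_coarsely_continuous K.

Definition Lip_s (s : R) : \bar R :=
  ereal_sup [set (`|f xy.1 - f xy.2| / `|xy.1 - xy.2|)%:E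
    | xy in [set xy : X * X | S xy.1 /\ S xy.2 /\ s <= `|xy.1 - xy.2|]].

Definition Lip_inf : \bar R := ereal_inf [set Lip_s s | s in [set s : R | 0 < s]].

Definition coarse_Lipschitz : Prop := exists2 s : R, 0 < s & (Lip_s s < +oo)%E.

Definition c_good (K d c : R) : Prop :=
  0 < c /\ forall (x : X) (r : R), S x -> d <= r ->
      cball_in setT (f x) r `<=` fatten (f @` cball_in S x (c * r)) K.

Definition c_d (K d : R) : \bar R :=
  ereal_inf [set c%:E | c in [set c : R | c_good K d c]].

Definition c_inf (K : R) : \bar R := ereal_inf [set c_d K d | d in [set d : R | K < d]].
End Maps.
End Defs.

(* Suppose beta_bar X (t / (48 L c)) > 3/2 rho_bar Y t, and let c1 be a good constant
   close to c = c_inf f.  Given x in S and a point v at distance about r from f x, write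
   v = f x + 2 a y with |y| = 1 and pick a finite-codimensional Z on which
   |y +- t z| <= 1 + rho, together with a 1/2-separated sequence of unit vectors z n of Z
   (Riesz's lemma, using that finite-dimensional subspaces are closed).  Lifting the
   points f x + a y + (a t / 2) z n gives a family that the large-scale Lipschitz bound
   keeps separated at scale c1 r; the beta-modulus puts one of its members close to x,
   and lifting v from that member reaches v from distance c1 (1 - g / 4) r of x.  So
   c1 (1 - g / 4) is again a good constant, contradicting the minimality of c. *)

From mathcomp Require Import all_boot all_order all_algebra.
From mathcomp Require Import all_classical all_reals all_analysis.
From mathcomp Require Import ring lra.
Import Order.TTheory GRing.Theory Num.Theory.
Import numFieldNormedType.Exports.
Local Open Scope classical_set_scope.
Local Open Scope ring_scope.
Set Implicit Arguments. Unset Strict Implicit.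

Lemma coherent_approximants_converge (R : realType) (P : R -> R -> Prop) :
  (exists l e, P l e) ->
  (forall l e mu eta, P l e -> P mu eta -> `|l - mu| <= e + eta) ->
  exists lam, forall l e, P l e -> `|l - lam| <= e.
Proof.
move=> [l0 [e0 P0]] coh.
pose A := [set z | exists l e, P l e /\ z = l - e].
have A_ub l e : P l e -> ubound A (l + e).
  move=> Ple _ [mu [eta [Pmu ->]]]; have := coh _ _ _ _ Ple Pmu.
  rewrite ler_norml => /andP[]; lra.
have supA : has_sup A by split; [exists (l0 - e0), l0, e0 | exists (l0 + e0); exact: A_ub].
exists (sup A) => l e Ple; rewrite ler_distlC; apply/andP; split.
- by apply: sup_upper_bound => //; exists l, e.
- by apply: ge_sup; [exists (l0 - e0), l0, e0 | exact: A_ub].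
Qed.

Section LinearSubspace.
Variables (R : realType) (Y : normedModType R) (Z : set Y).
Hypothesis linZ : lin_subspace Z.

Lemma lin_subspace0 : Z 0.
Proof. by case: linZ. Qed.

Lemma lin_subspaceD x y : Z x -> Z y -> Z (x + y).
Proof. by move=> Zx Zy; rewrite -[x]scale1r; apply: linZ.2. Qed.

Lemma lin_subspaceZ a x : Z x -> Z (a *: x).
Proof. by move=> Zx; rewrite -[a *: x]addr0; apply: linZ.2 => //; exact: lin_subspace0. Qed.

Lemma lin_subspaceN x : Z x -> Z (- x).
Proof. by move=> Zx; rewrite -scaleN1r; exact: lin_subspaceZ. Qed.

Lemma lin_subspaceB x y : Z x -> Z y -> Z (x - y).
Proof. by move=> Zx Zy; apply: lin_subspaceD => //; exact: lin_subspaceN. Qed.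

End LinearSubspace.

Section FiniteSpan.
Variables (R : realType) (Y : normedModType R).

Fixpoint in_span (s : seq Y) : set Y :=
  if s is v :: s' then [set x | exists l g, in_span s' g /\ x = l *: v + g]
  else [set 0].

Lemma lin_subspace_span s : lin_subspace (in_span s).
Proof.
elim: s => [|v s [IH0 IHl]] /=; first by split => // a x y -> ->; rewrite scaler0 addr0.
split; first by exists 0, 0; rewrite scale0r addr0.
move=> a _ _ [l [g [sg ->]]] [l' [g' [sg' ->]]].
exists (a * l + l'), (a *: g + g'); split; first exact: IHl.
by rewrite scalerDr scalerA addrACA scalerDl.
Qed.

Lemma in_span_cons v s x : in_span s x -> in_span (v :: s) x.
Proof. by move=> sx; exists 0, x; rewrite scale0r add0r. Qed.

Lemma in_span_mem s v : v \in s -> in_span s v.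
Proof.
elim: s => [//|w s IH]; rewrite in_cons => /orP[/eqP ->|/IH]; last exact: in_span_cons.
by exists 1, 0; rewrite scale1r addr0; split => //; exact: lin_subspace0 (lin_subspace_span s).
Qed.

Lemma in_span_catl s t x : in_span s x -> in_span (s ++ t) x.
Proof.
elim: s x => [|v s IH] x /=; first by move->; exact: lin_subspace0 (lin_subspace_span t).
by move=> [l [g [sg ->]]]; exists l, g; split => //; exact: IH.
Qed.

Lemma in_span_catr s t x : in_span t x -> in_span (s ++ t) x.
Proof. by elim: s => [//|v s IH] /= /IH; exact: in_span_cons. Qed.

Lemma in_span_sub (Z : set Y) s : lin_subspace Z -> (forall w, w \in s -> Z w) ->
  in_span s `<=` Z.
Proof.
move=> linZ; elim: s => [|v s IH] sZ x /=; first by move->; exact: lin_subspace0.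
move=> [l [g [sg ->]]]; apply: lin_subspaceD => //.
  by apply: lin_subspaceZ => //; apply: sZ; rewrite mem_head.
by apply: IH sg => w ws; apply: sZ; rewrite in_cons ws orbT.
Qed.

Lemma in_span_sum n (e : 'I_n -> Y) (c : 'I_n -> R) :
  in_span [seq e i | i <- enum 'I_n] (\sum_(i < n) c i *: e i).
Proof.
rewrite -big_enum /=; elim: (enum 'I_n) => [|i l IH]; first by rewrite big_nil.
by rewrite big_cons; exists (c i), (\sum_(j <- l) c j *: e j).
Qed.

Lemma in_span_coef s x : in_span s x ->
  exists c : nat -> R, x = \sum_(i < size s) c i *: s`_i.
Proof.
elim: s x => [|v s IH] x /=; first by move->; exists (fun=> 0); rewrite big_ord0.
move=> [l [g [/IH [c ->] ->]]]; exists (fun n => if n is k.+1 then c k else l).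
by rewrite big_ord_recl.
Qed.

Lemma in_span_not_all s : infinite_dim Y -> exists y, ~ in_span s y.
Proof.
move=> /(_ (size s) (fun i => s`_i)) [y hy]; exists y => /in_span_coef [c yE].
exact: (hy (fun i => c (val i))).
Qed.

Definition approx_by (A : set Y) (x : Y) : Prop :=
  forall e : R, 0 < e -> exists2 g, A g & `|x - g| < e.

Lemma approx_by_nil x : approx_by (in_span [::]) x -> x = 0.
Proof.
move=> ax; apply/eqP/negPn/negP => x0.
have x_gt0 : 0 < `|x| by rewrite normr_gt0.
by have [g /= ->] := ax `|x| x_gt0; rewrite subr0 ltxx.
Qed.

Lemma cons_span_norm_ge (v : Y) s e0 : (forall g, in_span s g -> e0 <= `|v - g|) ->
  forall l g, in_span s g -> `|l| * e0 <= `|l *: v + g|.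
Proof.
move=> far l g sg; have [->|l0] := eqVneq l 0; first by rewrite normr0 mul0r normr_ge0.
have -> : l *: v + g = l *: (v - (- l^-1 *: g)).
  by rewrite scaleNr opprK scalerDr scalerA divff // scale1r.
rewrite normrZ ler_wpM2l //; apply: far.
exact: lin_subspaceZ (lin_subspace_span s) _ _ sg.
Qed.

(* The coefficient of [v] in approximants of [x] is controlled by the distance
   [e0] from [v] to [in_span s]; completeness of [R] provides its limit [lam]. *)
Lemma approx_by_cons (v : Y) s x e0 : 0 < e0 ->
  (forall g, in_span s g -> e0 <= `|v - g|) ->
  approx_by (in_span (v :: s)) x -> exists lam, approx_by (in_span s) (x - lam *: v).
Proof.
move=> e0_gt0 far ax.
pose P l e := 0 < e /\ exists2 g, in_span s g & `|x - (l *: v + g)| < e * e0.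
have [lam lamP] : exists lam, forall l e, P l e -> `|l - lam| <= e.
  apply: coherent_approximants_converge.
    have [_ [l [g [sg ->]]] hg] := ax e0 e0_gt0.
    by exists l, 1; split => //; exists g; rewrite ?mul1r.
  move=> l e mu eta [e_gt0 [g sg hg]] [eta_gt0 [h sh hh]].
  rewrite -(ler_pM2r e0_gt0); apply: le_trans (cons_span_norm_ge far _ _) _.
    exact: lin_subspaceB (lin_subspace_span s) _ _ sg sh.
  have -> : (l - mu) *: v + (g - h) = (l *: v + g) - (mu *: v + h).
    by rewrite scalerBl opprD addrACA.
  by apply: le_trans (ler_distD x _ _) _; rewrite distrC mulrDl ltW // ltrD.
exists lam => e' e'_gt0.
have vpos : 0 < e0 + `|v| by rewrite ltr_wpDr.
pose e := e' / (e0 + `|v|).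
have e_gt0 : 0 < e by rewrite divr_gt0.
have [_ [l [g [sg ->]]] hg] := ax (e * e0) (mulr_gt0 e_gt0 e0_gt0).
have Ple : P l e by split => //; exists g.
exists g => //.
rewrite -addrA -opprD; apply: le_lt_trans (ler_distD (l *: v + g) _ _) _.
rewrite [lam *: v + g]addrC addrKA -scalerBl normrZ.
have -> : e' = e * e0 + e * `|v| by rewrite -mulrDr /e divfK // lt0r_neq0.
exact: ltr_leD hg (ler_wpM2r (normr_ge0 v) (lamP _ _ Ple)).
Qed.

Lemma in_span_closed s x : approx_by (in_span s) x -> in_span s x.
Proof.
elim: s x => [|v s IH] x ax; first exact: approx_by_nil.
have [v_in|v_out] := pselect (in_span s v).
  apply: in_span_cons; apply: IH => e e_gt0.
  have [_ [l [g [sg ->]]] hg] := ax e e_gt0.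
  exists (l *: v + g) => //; apply: lin_subspaceD (lin_subspace_span s) _ _ _ sg.
  exact: lin_subspaceZ (lin_subspace_span s) _ _ v_in.
have [e0 [e0_gt0 far]] : exists e0, 0 < e0 /\ forall g, in_span s g -> e0 <= `|v - g|.
  apply: contrapT => H; apply: v_out; apply: IH => e e_gt0.
  apply: contrapT => H2; apply: H; exists e; split => // g sg.
  by rewrite leNgt; apply/negP => lt; apply: H2; exists g.
have [lam /IH sx] := approx_by_cons e0_gt0 far ax.
by exists lam, (x - lam *: v); split => //; rewrite addrC subrK.
Qed.

End FiniteSpan.

Section Riesz.
Variables (R : realType) (Y : normedModType R).

Lemma approx_by_halving (Z M : set Y) : lin_subspace Z -> lin_subspace M -> M `<=` Z ->
  (forall w, Z w -> exists2 g, M g & 2 * `|w - g| <= `|w|) ->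
  forall w, Z w -> approx_by M w.
Proof.
move=> linZ linM MZ halve w Zw.
have iter m : exists2 g, M g & (2 ^ m)%:R * `|w - g| <= `|w|.
  elim: m => [|m [g Mg hg]]; first by exists 0; [exact: lin_subspace0 | rewrite mul1r subr0].
  have [h Mh hh] := halve (w - g) (lin_subspaceB linZ Zw (MZ _ Mg)).
  exists (g + h); first exact: lin_subspaceD.
  rewrite expnSr natrM -mulrA opprD addrA; apply: le_trans hg.
  by rewrite ler_wpM2l.
move=> e e_gt0; pose m := (Num.truncn (`|w| / e)).+1.
have [g Mg hg] := iter m; exists g => //.
have two_m_gt0 : (0 : R) < (2 ^ m)%:R by rewrite ltr0n expn_gt0.
rewrite -(ltr_pM2l two_m_gt0); apply: le_lt_trans hg _.
rewrite -ltr_pdivrMr //; apply: lt_le_trans (truncnS_gt _) _.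
by rewrite ler_nat ltnW // ltn_expl.
Qed.

Lemma fin_codim_far_unit (Z : set Y) (s : seq Y) : infinite_dim Y -> fin_codim Z ->
  (forall w, w \in s -> Z w) ->
  exists z, Z z /\ `|z| = 1 /\ forall w, w \in s -> 1 / 2 <= `|z - w|.
Proof.
move=> hY [linZ [n [e Ze]]] sZ; apply: contrapT => nofar.
have halve w : Z w -> exists2 g, in_span s g & 2 * `|w - g| <= `|w|.
  move=> Zw; have [->|w0] := eqVneq w 0.
    by exists 0; [exact: lin_subspace0 (lin_subspace_span s) | rewrite subr0 normr0 mulr0].
  have w_gt0 : 0 < `|w| by rewrite normr_gt0.
  pose z := `|w|^-1 *: w.
  have [w' w's hw'] : exists2 w', w' \in s & `|z - w'| < 1 / 2.
    apply: contrapT => H; apply: nofar; exists z; split; first exact: lin_subspaceZ.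
    split; first by rewrite normrZ normfV normr_id mulVf // lt0r_neq0.
    by move=> w' w's; rewrite leNgt; apply/negP => lt; apply: H; exists w'.
  exists (`|w| *: w'); first exact: lin_subspaceZ (lin_subspace_span s) _ _ (in_span_mem w's).
  have -> : w - `|w| *: w' = `|w| *: (z - w').
    by rewrite scalerBr scalerA divff ?scale1r // lt0r_neq0.
  by rewrite normrZ normr_id mulrCA -[leRHS]mulr1 ler_wpM2l //; lra.
have [y /(_ _)] := in_span_not_all (s ++ [seq e i | i <- enum 'I_n]) hY.
apply; apply: in_span_closed => eps eps_gt0.
have [w [c [Zw ->]]] := Ze y.
have [g sg hg] := approx_by_halving linZ (lin_subspace_span s) (in_span_sub linZ sZ) halve
  Zw eps_gt0.
exists (g + \sum_(i < n) c i *: e i); last by rewrite [g + _]addrC addrKA.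
apply: lin_subspaceD (lin_subspace_span _) _ _ _ _; first exact: in_span_catl.
exact/in_span_catr/in_span_sum.
Qed.

Lemma fin_codimT : fin_codim (@setT Y).
Proof.
split; first by split.
by exists 0%N, (fun=> 0) => y; exists y, (fun=> 0); rewrite big_ord0 addr0.
Qed.

Lemma fin_codim_unit (Z : set Y) : infinite_dim Y -> fin_codim Z -> exists z, Z z /\ `|z| = 1.
Proof.
move=> hY hZ; have nil_Z (w : Y) : w \in [::] -> Z w by [].
by have [z [Zz [z1 _]]] := fin_codim_far_unit hY hZ nil_Z; exists z.
Qed.

Lemma fin_codim_sep_seq (Z : set Y) : infinite_dim Y -> fin_codim Z ->
  exists z : nat -> Y, (forall n, Z (z n) /\ `|z n| = 1) /\
    forall i j, i <> j -> 1 / 2 <= `|z i - z j|.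
Proof.
move=> hY hZ.
have next_ex (s : seq Y) : exists z, (forall w, w \in s -> Z w) ->
    Z z /\ `|z| = 1 /\ forall w, w \in s -> 1 / 2 <= `|z - w|.
  have [sZ|] := pselect (forall w, w \in s -> Z w); last by exists 0.
  by have [z hz] := fin_codim_far_unit hY hZ sZ; exists z.
have [next next_far] := choice next_ex.
pose fix pre k := if k is k'.+1 then rcons (pre k') (next (pre k')) else [::].
have pre_inv k : (forall w, w \in pre k -> Z w) /\ forall i, (i < k)%N -> next (pre i) \in pre k.
  elim: k => [|k [preZ pre_mem]] //=.
  have [Znext _] := next_far _ preZ.
  split=> [w|i]; first by rewrite mem_rcons in_cons => /orP[/eqP ->|/preZ].
  by rewrite ltnS leq_eqVlt mem_rcons in_cons => /orP[/eqP ->|/pre_mem ->]; rewrite ?eqxx ?orbT.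
have far i j : (i < j)%N -> 1 / 2 <= `|next (pre j) - next (pre i)|.
  by move=> ij; have [preZ pre_mem] := pre_inv j; apply: (next_far _ preZ).2.2; exact: pre_mem.
exists (fun k => next (pre k)); split.
  by move=> k; have [Zk [k1 _]] := next_far _ (pre_inv k).1.
move=> i j /eqP; rewrite neq_ltn => /orP[ij|ji]; last exact: far.
by rewrite distrC; exact: far.
Qed.

End Riesz.

Section RhoBar.
Variables (R : realType) (Y : normedModType R).

Lemma rho_bar_ge0 t : infinite_dim Y -> (0 <= rho_bar Y t)%E.
Proof.
move=> hY; have [y [_ y1]] := fin_codim_unit hY (@fin_codimT _ Y).
apply: le_ereal_sup_tmp; eexists; first by exists y.
apply: le_ereal_inf_tmp => _ [Z hZ <-].
have [z [Zz z1]] := fin_codim_unit hY hZ.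
have sum_ge2 : 2 <= `|y + t *: z| + `|y + t *: (- z)|.
  have := ler_normD (y + t *: z) (y + t *: (- z)).
  by rewrite scalerN addrACA subrr addr0 -mulr2n -scaler_nat normrZ y1 mulr1 normr_nat.
have [u [Zu u1 yu1]] : exists u, [/\ Z u, `|u| = 1 & 1 <= `|y + t *: u|].
  have [h|h] := lerP 1 `|y + t *: z|; first by exists z.
  by exists (- z); split; [exact: lin_subspaceN hZ.1 _ Zz | rewrite normrN | lra].
apply: le_ereal_sup_tmp; exists (`|y + t *: u| - 1)%:E; first by exists u.
by rewrite lee_fin subr_ge0.
Qed.

Lemma rho_bar_le t : 0 <= t -> (rho_bar Y t <= t%:E)%E.
Proof.
move=> t0; apply: ge_ereal_sup => _ [y [_ y1] <-].
apply: ge_ereal_inf; exists (ereal_sup [set (`|y + t *: z| - 1)%:E | z in unit_sphere setT]).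
  by exists setT => //; exact: fin_codimT.
apply: ge_ereal_sup => _ [z [_ z1] <-].
rewrite lee_fin lerBlDl; apply: le_trans (ler_normD _ _) _.
by rewrite normrZ y1 z1 mulr1 ger0_norm.
Qed.

Lemma rho_bar_lt_sep_seq t rho : infinite_dim Y -> (rho_bar Y t < rho%:E)%E ->
  forall y : Y, `|y| = 1 -> exists z : nat -> Y,
    (forall n, `|y + t *: z n| <= 1 + rho /\ `|y - t *: z n| <= 1 + rho) /\
    forall i j, i <> j -> 1 / 2 <= `|z i - z j|.
Proof.
move=> hY rho_lt y y1.
have : (ereal_inf [set ereal_sup [set (`|y + t *: z| - 1)%:E | z in unit_sphere Z]
    | Z in [set Z : set Y | fin_codim Z]] <= rho_bar Y t)%E.
  by apply: ereal_sup_ubound; exists y.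
move=> /le_lt_trans /(_ rho_lt) /ereal_inf_lt [_ [Z hZ <-] supZ_lt].
have ZP u : Z u -> `|u| = 1 -> `|y + t *: u| <= 1 + rho.
  move=> Zu u1; have : ((`|y + t *: u| - 1)%:E <=
      ereal_sup [set (`|y + t *: z| - 1)%:E | z in unit_sphere Z])%E.
    by apply: ereal_sup_ubound; exists u.
  by move=> /le_lt_trans /(_ supZ_lt); rewrite lte_fin; lra.
have [z [zP z_sep]] := fin_codim_sep_seq hY hZ.
exists z; split => // n; have [Zz z1] := zP n; split; first exact: ZP.
rewrite -scalerN; apply: ZP; last by rewrite normrN.
exact: lin_subspaceN hZ.1 _ Zz.
Qed.

Lemma rho_bar_real (t : R) : infinite_dim Y -> 0 <= t ->
  exists2 rr, rho_bar Y t = rr%:E & 0 <= rr <= t.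
Proof.
move=> hY t_ge0; have := rho_bar_ge0 t hY; have := rho_bar_le t_ge0.
case: (rho_bar Y t) => [rr| |] //; rewrite !lee_fin => rr_le rr_ge0.
by exists rr; rewrite ?rr_ge0.
Qed.

Lemma rho_bar_lt_fan (t rho a : R) (y : Y) : infinite_dim Y -> (rho_bar Y t < rho%:E)%E ->
  `|y| = 1 -> 0 < a -> 0 < t -> exists B : nat -> Y,
    (forall n, `|(a / 2) *: y + B n| <= a / 2 * (1 + rho) /\
       `|(a / 2) *: y - B n| <= a / 2 * (1 + rho)) /\
    forall i j, i <> j -> a * t / 4 <= `|B i - B j|.
Proof.
move=> hY rho_lt y1 a_gt0 t_gt0; have a2_gt0 : 0 < a / 2 by lra.
have [z [zP z_sep]] := rho_bar_lt_sep_seq hY rho_lt y1.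
exists (fun n => (a / 2) *: (t *: z n)); split=> [n|i j ij].
  have [zn_plus zn_minus] := zP n.
  by split; rewrite -?scalerDr -?scalerBr normrZ gtr0_norm // ler_pM2l.
rewrite -!scalerBr normrZ (gtr0_norm a2_gt0) normrZ (gtr0_norm t_gt0) mulrA.
apply: le_trans (ler_wpM2l _ (z_sep i j ij)); first lra.
by rewrite mulr_ge0 // ltW.
Qed.

End RhoBar.

Lemma beta_bar_gt_near (R : realType) (X : normedModType R) s Bh (x m : X) (xs : nat -> X)
    (rad : R) :
  ((1 - Bh)%:E < beta_bar X s)%E -> 0 < rad -> `|x - m| <= rad ->
  (forall n, `|xs n - m| <= rad) -> (forall i j, i <> j -> s * rad <= `|xs i - xs j|) ->
  exists n, `|x - xs n| < 2 * Bh * rad.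
Proof.
move=> beta_gt rad_gt0 xm xsm xs_sep.
have sup_lt : (ereal_sup [set ereal_inf [set (`|xu.1 - xu.2 n| / 2)%:E | n in [set: nat]]
     | xu in [set xu : X * (nat -> X) | unit_ball xu.1 /\ (forall n, unit_ball (xu.2 n)) /\
         (s%:E <= sep xu.2)%E]] < Bh%:E)%E.
  by move: beta_gt; rewrite lte_suber_addl // -lteBrDr // -EFinB subKr.
have rad_inv_ge0 : 0 <= rad^-1 by rewrite invr_ge0 ltW.
pose scale (z : X) := rad^-1 *: (z - m).
have scale_dist z z' : `|scale z - scale z'| = `|z - z'| / rad.
  by rewrite -scalerBr [z' - m]addrC addrKA normrZ ger0_norm // mulrC.
have scale_ball z : `|z - m| <= rad -> unit_ball (scale z).
  by move=> zm; rewrite /unit_ball /= normrZ ger0_norm // mulrC ler_pdivrMr ?mul1r.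
have : (ereal_inf [set (`|scale x - scale (xs n)| / 2)%:E | n in [set: nat]] < Bh%:E)%E.
  apply: le_lt_trans sup_lt; apply: ereal_sup_ubound.
  exists (scale x, scale \o xs) => //; split; first exact: scale_ball.
  split=> [n|]; first exact: scale_ball.
  apply: le_ereal_inf_tmp => _ [[i j] /= ij <-]; rewrite lee_fin scale_dist ler_pdivlMr //.
  exact: xs_sep.
move=> /ereal_inf_lt [_ [n _ <-]]; rewrite lte_fin scale_dist => hn; exists n.
by rewrite !ltr_pdivrMr // in hn; lra.
Qed.

Lemma beta_bar_le0 (R : realType) (X : normedModType R) s : infinite_dim X -> s <= 0 ->
  (beta_bar X s <= 0)%E.
Proof.
move=> hX s_le0; have [e [_ e1]] := fin_codim_unit hX (@fin_codimT _ X).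
rewrite /beta_bar sube_le0; apply: le_ereal_sup_tmp.
exists (ereal_inf [set (`|e - - e| / 2)%:E | n in [set: nat]]).
  exists (e, fun=> - e) => //=; split; first by rewrite /unit_ball /= e1.
  split; first by move=> n; rewrite /unit_ball /= normrN e1.
  by apply: le_ereal_inf_tmp => _ [ij _ <-]; rewrite /= subrr normr0 lee_fin.
apply: le_ereal_inf_tmp => _ [n _ <-].
by rewrite lee_fin opprK -mulr2n normrMn e1 divff.
Qed.

Lemma far_step_arith (R : realFieldType) (a r rho Bh g K : R) :
  0 <= a -> a <= r / 2 -> 0 <= rho -> 0 <= g -> g <= 1 -> Bh + 3 / 2 * rho <= 1 - g ->
  0 <= K -> 12 * K <= g * r ->
  (a / 2 * (1 + rho) + K + a / 2) + 2 * Bh * (a / 2 * (1 + rho) + K) <= (1 - g / 4) * r.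
Proof.
move=> a_ge0 a_le rho_ge0 g_ge0 g_le1 gap K_ge0 gK.
have Bh_rho : 0 <= (1 - Bh) * (a * rho) by rewrite mulr_ge0 ?mulr_ge0 //; lra.
have Bh_a : Bh * a <= (1 - g - 3 / 2 * rho) * a by rewrite ler_wpM2r //; lra.
have Bh_K : 0 <= (1 - Bh) * K by rewrite mulr_ge0 //; lra.
have a_r : a * (2 - g) <= r / 2 * (2 - g) by rewrite ler_wpM2r //; lra.
lra.
Qed.

Lemma addr_split4 (V : zmodType) (u a b : V) :
  u + (a + a + a + a) = u + a + (a + b) + (a - b + a).
Proof. by rewrite -!addrA; do 3!congr (_ + _); rewrite addrCA addNKr. Qed.

Lemma c_good_lift (R : realType) (X Y : normedModType R) (S : set X) (f : X -> Y) K d c x r p :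
  c_good S f K d c -> S x -> d <= r -> `|p - f x| <= r ->
  exists x', [/\ S x', `|x' - x| <= c * r & `|p - f x'| <= K].
Proof.
move=> [_ good] Sx dr pfx.
by have [_ [x' [Sx' x'x] <-] pfx'] := good x r Sx dr p (conj I pfx); exists x'.
Qed.

Section Improvement.
Variables (R : realType) (X Y : normedModType R) (S : set X) (f : X -> Y).
Variables (K L W d c1 s t rho Bh : R).
(* [s] stands for [t / (48 L c)]: then [24 L c1 s <= t] as soon as [c1 <= 2 c]. *)
Hypothesis infdimY : infinite_dim Y.
Hypothesis lip_far : forall x1 x2, S x1 -> S x2 -> W < `|f x1 - f x2| ->
  `|f x1 - f x2| <= 2 * L * `|x1 - x2|.
Hypothesis good : c_good S f K d c1.
Hypothesis rho_lt : (rho_bar Y t < rho%:E)%E.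
Hypothesis beta_gt : ((1 - Bh)%:E < beta_bar X s)%E.

Lemma lifts_separated (xs : nat -> X) (p : nat -> Y) (delta : R) :
  (forall n, S (xs n)) -> (forall n, `|p n - f (xs n)| <= K) -> W + 2 * K < delta ->
  (forall i j, i <> j -> delta <= `|p i - p j|) ->
  forall i j, i <> j -> delta - 2 * K <= 2 * L * `|xs i - xs j|.
Proof.
move=> xsS xsp delta_gt p_sep i j ij.
move: (xsS i) (xsS j) (xsp i) (xsp j) => Si Sj hi hj.
have tri : `|p i - p j| <= K + `|f (xs i) - f (xs j)| + K.
  apply: le_trans (ler_distD (f (xs j)) _ _) _; apply: lerD; last by rewrite distrC.
  by apply: le_trans (ler_distD (f (xs i)) _ _) _; apply: lerD.
have := p_sep i j ij; have := lip_far Si Sj; lra.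
Qed.

Lemma lift_fan x (q : Y) (P : nat -> Y) (r0 rP delta : R) : 0 <= K -> 0 < c1 ->
  S x -> d <= r0 -> r0 <= rP -> `|q - f x| <= r0 -> (forall n, `|P n| <= rP) ->
  W + 2 * K < delta -> (forall i j, i <> j -> delta <= `|P i - P j|) ->
  exists m (xs : nat -> X), [/\ `|x - m| <= c1 * (rP + K), forall n, S (xs n),
    forall n, `|xs n - m| <= c1 * (rP + K), forall n, `|q + P n - f (xs n)| <= K &
    forall i j, i <> j -> delta - 2 * K <= 2 * L * `|xs i - xs j|].
Proof.
move=> K_ge0 c1_gt0 Sx dr0 r0P qx P_le delta_gt P_sep.
have [m [Sm mx qm]] := c_good_lift good Sx dr0 qx.
have qPm n : `|q + P n - f m| <= rP + K.
  rewrite addrAC; apply: le_trans (ler_normD _ _) _.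
  by rewrite [rP + K]addrC; exact: lerD qm (P_le n).
have d_le : d <= rP + K by lra.
have [xs xsP] := choice (fun n => c_good_lift good Sm d_le (qPm n)).
have [xsS xsm xsq] : [/\ forall n, S (xs n), forall n, `|xs n - m| <= c1 * (rP + K) &
    forall n, `|q + P n - f (xs n)| <= K] by split=> n; case: (xsP n).
exists m, xs; split => //.
  by rewrite distrC; apply: le_trans mx _; rewrite ler_pM2l //; lra.
apply: lifts_separated xsS xsq delta_gt _ => i j ij.
by rewrite [q + P i]addrC addrKA; exact: P_sep.
Qed.

Lemma sep_scale_arith (a rP : R) : 0 <= K -> 0 < L -> t <= 1 -> 0 <= rho -> rho <= 2 ->
  24 * L * c1 * s <= t -> 0 <= a -> 32 * K <= t * a -> rP = a / 2 * (1 + rho) ->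
  2 * L * (s * (c1 * (rP + K))) <= a * t / 4 - 2 * K.
Proof.
move=> K_ge0 L_gt0 t_le1 rho_ge0 rho_le2 s_small a_ge0 Ka ->.
have r1_ge0 : 0 <= a / 2 * (1 + rho) + K by rewrite addr_ge0 ?mulr_ge0 //; lra.
have -> : 2 * L * (s * (c1 * (a / 2 * (1 + rho) + K))) =
    24 * L * c1 * s * ((a / 2 * (1 + rho) + K) / 12) by field.
apply: le_trans (ler_wpM2r (divr_ge0 r1_ge0 _) s_small) _; first lra.
have : 0 <= (2 - rho) * (t * a) by rewrite mulr_ge0 //; lra.
have : 0 <= (1 - t) * K by rewrite mulr_ge0 //; lra.
nra.
Qed.

(* The points [f x + A + (A + B n)] are [a t / 4]-separated, so their lifts are
   [s]-separated at scale [c1 r1]; the one that is [2 Bh c1 r1]-close to [x] lies within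
   [r2] of [f x + 4 A]. *)
Lemma improve_far x (y : Y) (a : R) : 0 <= K -> 0 < L -> 0 < c1 -> 0 < t -> t <= 1 ->
  0 <= rho -> rho <= 2 -> 24 * L * c1 * s <= t ->
  S x -> `|y| = 1 -> 0 < a -> 2 * d <= a -> 4 * (W + 2 * K + 1) <= t * a -> 32 * K <= t * a ->
  let r1 := a / 2 * (1 + rho) + K in let r2 := r1 + a / 2 in
  exists2 w, S w & `|w - x| <= c1 * r2 + 2 * Bh * (c1 * r1) /\
    `|f x + (2 * a) *: y - f w| <= K.
Proof.
move=> K_ge0 L_gt0 c1_gt0 t_gt0 t_le1 rho_ge0 rho_le2 s_small Sx y1 a_gt0 da Wa Ka r1 r2.
have a2_gt0 : 0 < a / 2 by lra.
have [B [AB_le B_sep]] := rho_bar_lt_fan infdimY rho_lt y1 a_gt0 t_gt0.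
pose A := (a / 2) *: y; pose rP := a / 2 * (1 + rho).
have A_norm : `|A| = a / 2 by rewrite normrZ y1 mulr1 gtr0_norm.
have AB_sep i j : i <> j -> a * t / 4 <= `|A + B i - (A + B j)|.
  by move=> ij; rewrite [A + B i]addrC addrKA; exact: B_sep.
have rP_ge : a / 2 <= rP by rewrite /rP; have := mulr_ge0 (ltW a2_gt0) rho_ge0; lra.
have xA : `|f x + A - f x| <= a / 2 by rewrite addrAC subrr add0r A_norm.
have [m [xs [xm xsS xsm xsq xs_sep]]] := lift_fan (q := f x + A) (P := fun n => A + B n)
  K_ge0 c1_gt0 Sx (ltac:(lra) : d <= a / 2) rP_ge xA (fun n => (AB_le n).1)
  (ltac:(lra) : W + 2 * K < a * t / 4) AB_sep.
have r1_gt0 : 0 < r1 by rewrite /r1; have := mulr_ge0 (ltW a2_gt0) rho_ge0; lra.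
have xs_sep' i j : i <> j -> s * (c1 * r1) <= `|xs i - xs j|.
  move=> ij; rewrite -(ler_pM2l (_ : 0 < 2 * L)); last lra.
  apply: le_trans (xs_sep i j ij).
  exact: sep_scale_arith K_ge0 L_gt0 t_le1 rho_ge0 rho_le2 s_small (ltW a_gt0) Ka erefl.
have [n xn] := beta_bar_gt_near beta_gt (mulr_gt0 c1_gt0 r1_gt0) xm xsm xs_sep'.
have vn : `|f x + (2 * a) *: y - f (xs n)| <= r2.
  have -> : (2 * a) *: y = A + A + A + A.
    have -> : 2 * a = a / 2 + a / 2 + a / 2 + a / 2 by lra.
    by rewrite !scalerDl.
  rewrite (addr_split4 _ _ (B n)) [_ + (A - B n + A) - _]addrAC.
  apply: le_trans (ler_normD _ _) _.
  have ABA : `|A - B n + A| <= rP + a / 2.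
    by apply: le_trans (ler_normD _ _) _; rewrite A_norm; exact: lerD (AB_le n).2 (lexx _).
  by have := lerD (xsq n) ABA; rewrite /r2 /r1 /rP; lra.
have d_r2 : d <= r2 by rewrite /r2 /r1; have := mulr_ge0 (ltW a2_gt0) rho_ge0; lra.
have [w [Sw wn vw]] := c_good_lift good (xsS n) d_r2 vn.
exists w => //; split => //.
apply: le_trans (ler_distD (xs n) _ _) _; rewrite [`|xs n - x|]distrC.
exact: lerD wn (ltW xn).
Qed.

Lemma c_good_improve (D g : R) : 0 <= K -> 0 < L -> 0 < c1 -> 0 <= d -> 0 < t -> t <= 1 ->
  0 <= rho -> rho <= 2 -> 24 * L * c1 * s <= t -> 0 <= g -> g <= 1 ->
  Bh + 3 / 2 * rho <= 1 - g -> 8 * d <= D -> 16 * (W + 2 * K + 1) <= t * D ->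
  128 * K <= t * D -> 12 * K <= g * D -> c_good S f K D (c1 * (1 - g / 4)).
Proof.
move=> K_ge0 L_gt0 c1_gt0 d_ge0 t_gt0 t_le1 rho_ge0 rho_le2 s_small g_ge0 g_le1 gap
  dD WD KtD KgD.
split; first by rewrite mulr_gt0 //; lra.
move=> x r Sx Dr p [_ px].
have [tD_le gD_le] : t * D <= t * r /\ g * D <= g * r by rewrite !ler_wpM2l // ltW.
suff [w [Sw wx pw]] : exists w, [/\ S w, `|w - x| <= c1 * (1 - g / 4) * r & `|p - f w| <= K].
  by exists (f w) => //; exists w.
have [near|far] := lerP `|p - f x| (r / 2).
  have [w [Sw wx pw]] := c_good_lift good Sx (ltac:(lra) : d <= r / 2) near.
  exists w; split => //; apply: le_trans wx _.
  by rewrite -mulrA ler_pM2l //; nra.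
pose a := `|p - f x| / 2; pose y := `|p - f x|^-1 *: (p - f x).
have a_gt0 : 0 < a by rewrite /a; lra.
have pfx_neq0 : `|p - f x| != 0 by rewrite gt_eqF //; lra.
have y1 : `|y| = 1 by rewrite normrZ normfV normr_id mulVf.
have pE : p = f x + (2 * a) *: y.
  by rewrite /a /y mulrC divfK ?pnatr_eq0 // scalerA mulfV // scale1r addrC subrK.
have a_ge : r / 4 <= a by rewrite /a; lra.
have ta_ge : t * r / 4 <= t * a by rewrite -mulrA ler_wpM2l // ltW.
have [w Sw [wx pw]] := improve_far K_ge0 L_gt0 c1_gt0 t_gt0 t_le1 rho_ge0 rho_le2 s_small
  Sx y1 a_gt0 (ltac:(rewrite /a; lra)) (ltac:(lra)) (ltac:(lra)).
exists w; split => //; last by rewrite pE.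
apply: le_trans wx _.
have := far_step_arith (ltW a_gt0) (ltac:(rewrite /a; lra) : a <= r / 2) rho_ge0 g_ge0 g_le1
  gap K_ge0 (ltac:(lra) : 12 * K <= g * r).
by move/(ler_wpM2l (ltW c1_gt0)); lra.
Qed.

End Improvement.

Lemma beta_gap_witness (R : realType) (b : \bar R) (rr : R) : 0 <= rr <= 1 ->
  ~ (b <= (3 / 2 * rr)%:E)%E ->
  exists rho Bh g : R, [/\ rr < rho <= 2, 0 < g <= 1, Bh + 3 / 2 * rho <= 1 - g &
    ((1 - Bh)%:E < b)%E].
Proof.
move=> /andP[rr_ge0 rr_le1]; case: b => [b| |] b_gt; last by exfalso; apply: b_gt; rewrite leNye.
  have {}b_gt : 3 / 2 * rr < b by rewrite ltNge; apply/negP; rewrite -lee_fin.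
  have [e [e_gt0 e_le1 e_le]] : exists e : R, [/\ 0 < e, e <= 1 / 6 & 6 * e <= b - 3 / 2 * rr].
    have [gap_le1|gap_gt1] := lerP (b - 3 / 2 * rr) 1.
      by exists ((b - 3 / 2 * rr) / 6); split; lra.
    by exists (1 / 6); split; lra.
  exists (rr + e), (1 - b + e), e.
  by split; [apply/andP; split | apply/andP; split | | rewrite lte_fin]; lra.
exists (rr + 1 / 6), (- (3 / 2) * rr - 1), 1.
by split; [apply/andP; split | apply/andP; split | | exact: ltry]; lra.
Qed.

Section CoarseQuotientBounds.
Variables (R : realType) (X Y : normedModType R) (S : set X) (f : X -> Y).

Lemma Lip_inf_lt_bound (L : R) : 0 < L -> Lip_inf S f = L%:E -> exists2 s0, 0 < s0 &
  forall x1 x2, S x1 -> S x2 -> s0 <= `|x1 - x2| -> `|f x1 - f x2| <= 2 * L * `|x1 - x2|.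
Proof.
move=> L_gt0 LipE.
have : (Lip_inf S f < (2 * L)%:E)%E by rewrite LipE lte_fin; lra.
case/ereal_inf_lt => _ [s0 s0_gt0 <-] Lip_lt; exists s0 => // x1 x2 S1 S2 s0_le.
have dist_gt0 : 0 < `|x1 - x2| by apply: lt_le_trans s0_le.
have : ((`|f x1 - f x2| / `|x1 - x2|)%:E <= Lip_s S f s0)%E.
  by apply: ereal_sup_ubound; exists (x1, x2).
by move=> /le_lt_trans /(_ Lip_lt); rewrite lte_fin ltr_pdivrMr // => /ltW.
Qed.

Lemma modulus_cont_bound (s0 : R) : coarsely_continuous S f -> 0 < s0 -> exists W,
  forall x1 x2, S x1 -> S x2 -> `|x1 - x2| <= s0 -> `|f x1 - f x2| <= W.
Proof.
move=> cc s0_gt0; have := cc s0 s0_gt0.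
have le_mod x1 x2 : S x1 -> S x2 -> `|x1 - x2| <= s0 ->
    ((`|f x1 - f x2|)%:E <= modulus_cont S f s0)%E.
  by move=> S1 S2 x12; apply: ereal_sup_ubound; exists (x1, x2).
case: (modulus_cont S f s0) le_mod => [w| |] le_mod // _.
  by exists w => x1 x2 S1 S2 x12; rewrite -lee_fin le_mod.
by exists 0 => x1 x2 S1 S2 x12; have := le_mod _ _ S1 S2 x12; rewrite leeNy_eq.
Qed.

(* Below the scale [s0] the modulus of continuity bounds [f]; above it, [Lip_inf]. *)
Lemma lip_large_values (L : R) : coarsely_continuous S f -> 0 < L -> Lip_inf S f = L%:E ->
  exists W, forall x1 x2, S x1 -> S x2 -> W < `|f x1 - f x2| ->
    `|f x1 - f x2| <= 2 * L * `|x1 - x2|.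
Proof.
move=> cc L_gt0 LipE; have [s0 s0_gt0 lip] := Lip_inf_lt_bound L_gt0 LipE.
have [W small] := modulus_cont_bound cc s0_gt0.
exists W => x1 x2 S1 S2 W_lt; apply: lip => //; rewrite leNgt; apply/negP => x12.
by have := small _ _ S1 S2 (ltW x12); rewrite leNgt W_lt.
Qed.

Lemma c_inf_ge0 (K c : R) : c_inf S f K = c%:E -> 0 <= c.
Proof.
move=> cE; have : (0 <= c_inf S f K)%E.
  apply: le_ereal_inf_tmp => _ [d _ <-]; apply: le_ereal_inf_tmp => _ [c' [c'_gt0 _] <-].
  by rewrite lee_fin ltW.
by rewrite cE lee_fin.
Qed.

Lemma c_inf_le_good (K c D c' : R) : c_inf S f K = c%:E -> K < D -> c_good S f K D c' ->
  c <= c'.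
Proof.
move=> cE KD good; rewrite -lee_fin -cE.
apply: le_trans (_ : c_d S f K D <= c'%:E)%E; first by apply: ereal_inf_lbound; exists D.
by apply: ereal_inf_lbound; exists c'.
Qed.

Lemma c_inf_near (K c e : R) : c_inf S f K = c%:E -> 0 < e ->
  exists d c1, [/\ K < d, c_good S f K d c1, c <= c1 & c1 < c + e].
Proof.
move=> cE e_gt0; have : (c_inf S f K < (c + e)%:E)%E by rewrite cE lte_fin; lra.
case/ereal_inf_lt => _ [d Kd <-] /ereal_inf_lt [_ [c1 good <-]]; rewrite lte_fin => c1_lt.
by exists d, c1; split => //; exact: c_inf_le_good cE Kd good.
Qed.

(* Were [beta_bar X (t / (48 L c))] larger than [3/2 rho_bar Y t], every good constant
   [c1] close to [c_inf] could be improved by a factor [1 - g / 4]. *)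
Lemma no_beta_rho_gap (K L c t rho Bh g : R) : infinite_dim Y -> 0 <= K ->
  coarsely_continuous S f -> Lip_inf S f = L%:E -> c_inf S f K = c%:E ->
  0 < L -> 0 < c -> 0 < t -> t <= 1 -> rho <= 2 -> 0 < g -> g <= 1 ->
  Bh + 3 / 2 * rho <= 1 - g -> ((1 - Bh)%:E < beta_bar X (t / (48 * L * c)))%E ->
  (rho_bar Y t < rho%:E)%E -> False.
Proof.
move=> hY K_ge0 cc LipE cE L_gt0 c_gt0 t_gt0 t_le1 rho_le2 g_gt0 g_le1 gap beta_gt rho_lt.
have rho_ge0 : 0 <= rho.
  by have := le_lt_trans (rho_bar_ge0 t hY) rho_lt; rewrite lte_fin => /ltW.
have [W lip_far] := lip_large_values cc L_gt0 LipE.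
have cg_gt0 : 0 < c * g / 8 by rewrite divr_gt0 ?mulr_gt0.
have [d [c1 [Kd good c_le c1_lt]]] := c_inf_near cE cg_gt0.
have c1_gt0 : 0 < c1 by lra.
have s_small : 24 * L * c1 * (t / (48 * L * c)) <= t.
  have -> : 24 * L * c1 * (t / (48 * L * c)) = t * (c1 / (2 * c)).
    by field; rewrite !lt0r_neq0.
  apply: ler_piMr; first exact: ltW.
  by rewrite ler_pdivrMr ?mulr_gt0 //; nra.
pose D := 8 * d + (16 * `|W + 2 * K + 1| + 128 * K) / t + 12 * K / g + K + 1.
have tD_ge0 : 0 <= (16 * `|W + 2 * K + 1| + 128 * K) / t.
  by apply: divr_ge0; [rewrite addr_ge0 ?mulr_ge0 | exact: ltW].
have gD_ge0 : 0 <= 12 * K / g by apply: divr_ge0; [rewrite mulr_ge0 | exact: ltW].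
have tD : 16 * `|W + 2 * K + 1| + 128 * K <= t * D by rewrite -ler_pdivrMl // /D; lra.
have gD : 12 * K <= g * D by rewrite -ler_pdivrMl // /D; lra.
have KD : K < D by rewrite /D; lra.
have dD : 8 * d <= D by rewrite /D; lra.
have WD : 16 * (W + 2 * K + 1) <= t * D by have := ler_norm (W + 2 * K + 1); lra.
have KtD : 128 * K <= t * D by have := normr_ge0 (W + 2 * K + 1); lra.
have := c_inf_le_good cE KD (c_good_improve hY lip_far good rho_lt beta_gt K_ge0 L_gt0
  c1_gt0 (ltac:(lra)) t_gt0 t_le1 rho_ge0 rho_le2 s_small (ltW g_gt0) g_le1 gap dD WD KtD gD).
have cg := mulr_gt0 c_gt0 g_gt0; have c1g : c1 * (1 - g / 4) < (c + c * g / 8) * (1 - g / 4).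
  by rewrite ltr_pM2r //; lra.
nra.
Qed.

End CoarseQuotientBounds.

Unset Implicit Arguments. Set Strict Implicit.

Theorem theorem3p2 (R : realType) (X Y : completeNormedModType R)
  (S : set X) (K : R) (f : X -> Y) :
  infinite_dim X -> infinite_dim Y -> 0 <= K ->
  coarse_quotient S f K -> coarse_Lipschitz S f ->
  forall L c : R, Lip_inf S f = L%:E -> c_inf S f K = c%:E ->
  forall t : R, 0 < t -> t <= 1 ->
  (beta_bar X (t / (48 * L * c)) <= (3 / 2)%:E * rho_bar Y t)%E.
Proof.
move=> hX hY K_ge0 [cc _] _ L c LipE cE t t_gt0 t_le1.
have [rr rhoE /andP[rr_ge0 rr_le]] := rho_bar_real hY (ltW t_gt0).
rewrite rhoE -EFinM.
have [s_le0|s_gt0] := lerP (t / (48 * L * c)) 0.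
  by apply: le_trans (beta_bar_le0 hX s_le0) _; rewrite lee_fin mulr_ge0.
have Lc_gt0 : 0 < 48 * L * c by move: s_gt0; rewrite pmulr_rgt0 // invr_gt0.
have c_gt0 : 0 < c.
  rewrite lt_def (c_inf_ge0 cE) andbT; apply: contraTneq Lc_gt0 => ->.
  by rewrite mulr0 ltxx.
have L_gt0 : 0 < L by move: Lc_gt0; rewrite pmulr_lgt0 // pmulr_rgt0.
apply: contrapT => /beta_gap_witness [|rho [Bh [g [/andP[rr_lt rho_le2] /andP[g_gt0 g_le1]]]]].
  by rewrite rr_ge0; lra.
move=> gap beta_gt; apply: (no_beta_rho_gap hY K_ge0 cc LipE cE L_gt0 c_gt0 t_gt0 t_le1 rho_le2
  g_gt0 g_le1 gap beta_gt).
by rewrite rhoE lte_fin.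
Qed.
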